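(* Let $U$, $\widetilde U$ be groups, $\widetilde V\le \widetilde U$ a subgroup, and $I$ an index set. Let $\widetilde{\mathcal A}=\{\widetilde G_{ij},\widetilde\phi^i_{ij}\mid i\neq j\in I\}$ be a $\widetilde U$-amalgam over $I$ such that $\widetilde G_{ij}=\langle \widetilde\phi^i_{ij}(\widetilde U),\widetilde\phi^j_{ij}(\widetilde U)\rangle$ for all $i\ne j$, and let $\mathcal A=\{G_{ij},\phi^i_{ij}\mid i\neq j\in I\}$ be a $U$-amalgam over $I$. Let $\alpha=\{\pi,\rho^i,\alpha_{ij}\}:\widetilde{\mathcal A}\to\mathcal A$ be an epimorphism of amalgams, let $(\widetilde G,\{\widetilde\tau_{ij}\})$ and $(G,\{\tau_{ij}\})$ be universal enveloping groups of $\widetilde{\mathcal A}$ and $\mathcal A$, and let $\widehat\alpha:\widetilde G\to G$ be the unique epimorphism with $\widehat\alpha\circ\widetilde\tau_{ij}=\tau_{\pi(i)\pi(j)}\circ\alpha_{ij}$ for all $i\ne j$. For $i\neq j$ put $Z^i_{ij}:=\widetilde\phi^i_{ij}(\widetilde V)$, $Z_{ij}:=\langle Z^i_{ij},Z^j_{ij}\rangle$ and $A_{ij}:=\ker(\alpha_{ij})$. If $A_{ij}\le Z_{ij}\le Z(\widetilde G_{ij})$ for all $i\ne j$, then $N:=\langle \widetilde\tau_{ij}(A_{ij})\mid i\ne j\in I\rangle$ is contained in the centre of $\widetilde G$, $N=\ker\widehat\alpha$, and $\widetilde G/N\cong G$ via $\widehat\alpha$; i.e. $\widetilde G$ is a central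 extension of $G$ by $N$.
   Context: A $U$-amalgam over a set $I$ is a family $\{G_{ij},\phi^i_{ij}\mid i\ne j\in I\}$ of groups $G_{ij}$ (indexed by unordered pairs, $G_{ij}=G_{ji}$) and monomorphisms $\phi^i_{ij}:U\to G_{ij}$. An enveloping group of such an amalgam is a group $G$ with homomorphisms $\tau_{ij}:G_{ij}\to G$ such that $G$ is generated by the $\tau_{ij}(G_{ij})$ and $\tau_{ij}\circ\phi^j_{ij}=\tau_{kj}\circ\phi^j_{kj}$ for all pairwise distinct $i,j,k$; it is universal if for every enveloping group $(H,\{\tau'_{ij}\})$ there is a unique epimorphism $p:G\to H$ with $p\circ\tau_{ij}=\tau'_{ij}$ for all $i\ne j$. If $\widetilde{\mathcal A}$ is a $\widetilde U$-amalgam and $\mathcal A$ a $U$-amalgam over $I$, an epimorphism $\widetilde{\mathcal A}\to\mathcal A$ is a system $\{\pi,\rho^i,\alpha_{ij}\}$ consisting of a permutation $\pi$ of $I$, group epimorphisms $\rho^i:\widetilde U\to U$ and group epimorphisms $\alpha_{ij}:\widetilde G_{ij}\to G_{\pi(i)\pi(j)}$ with $\alpha_{ij}\circ\widetilde\phi^i_{ij}=\phi^{\pi(i)}_{\pi(i)\pi(j)}\circ\rho^{\pi(i)}$ for all $i\ne j$. *)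

From Stdlib Require Import Classical FunctionalExtensionality.
Set Implicit Arguments.

Record group := Group {
  gcar :> Type;
  gmul : gcar -> gcar -> gcar;
  gone : gcar;
  ginv : gcar -> gcar;
  gmulA : forall x y z, gmul x (gmul y z) = gmul (gmul x y) z;
  gmul1 : forall x, gmul gone x = x;
  gmulV : forall x, gmul (ginv x) x = gone
}.
Arguments gmul {g}.
Arguments gone {g}.
Arguments ginv {g}.

Record hom (G H : group) := Hom {
  hfun :> G -> H;
  hmul : forall x y, hfun (gmul x y) = gmul (hfun x) (hfun y)
}.

Definition injective {A B : Type} (f : A -> B) := forall x y, f x = f y -> x = y.
Definition surjective {A B : Type} (f : A -> B) := forall y, exists x, f x = y.

Definition subgroup {G : group} (H : G -> Prop) : Prop :=
  H gone /\ (forall x y, H x -> H y -> H (gmul x y)) /\ (forall x, H x -> H (ginv x)).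

Definition gen {G : group} (S : G -> Prop) : G -> Prop :=
  fun x => forall H : G -> Prop, subgroup H -> (forall y, S y -> H y) -> H x.

Definition center {G : group} : G -> Prop :=
  fun x => forall y : G, gmul x y = gmul y x.

Definition ker {G H : group} (f : hom G H) : G -> Prop := fun x => f x = gone.

Definition edge (I : Type) :=
  { S : I -> Prop | exists i j, i <> j /\ forall k, S k <-> (k = i \/ k = j) }.

Definition inE {I : Type} (i : I) (e : edge I) : Prop := proj1_sig e i.

(** U-amalgams over I: a group G_e for each unordered pair e = {i,j}, and for
    each i in e a monomorphism phi^i_e : U -> G_e (phi is total in i; only its
    values for i in e are meaningful). *)
Record amalgam (I : Type) (U : group) := Amalgam {
  agrp : edge I -> group;
  aphi : I -> forall e : edge I, hom U (agrp e);
  aphi_inj : forall (e : edge I) (i : I), inE i e -> injective (aphi i e)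
}.

(** The condition tau_{ij} o phi^j_{ij} = tau_{kj} o phi^j_{kj} for pairwise
    distinct i,j,k is written as: for any two pairs e, f both containing j. *)
Definition enveloping (I : Type) (U : group) (A : amalgam I U) (G : group)
  (tau : forall e, hom (agrp A e) G) : Prop :=
  (forall x : G, gen (fun y => exists e z, y = tau e z) x) /\
  (forall (e f : edge I) (j : I), inE j e -> inE j f ->
     forall u : U, tau e (aphi A j e u) = tau f (aphi A j f u)).

Definition universal (I : Type) (U : group) (A : amalgam I U) (G : group)
  (tau : forall e, hom (agrp A e) G) : Prop :=
  enveloping A tau /\
  forall (H : group) (tau' : forall e, hom (agrp A e) H),
    enveloping A tau' ->
    exists p : hom G H,
      surjective p /\ (forall e z, p (tau e z) = tau' e z) /\
      (forall q : hom G H, surjective q -> (forall e z, q (tau e z) = tau' e z) ->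
         forall x, q x = p x).

Record perm (I : Type) := Perm {
  pfun :> I -> I;
  pinv : I -> I;
  pK : forall i, pinv (pfun i) = i;
  pKV : forall i, pfun (pinv i) = i
}.

Lemma mapE_proof (I : Type) (p : perm I) (e : edge I) :
  exists i j, i <> j /\ forall k, proj1_sig e (pinv p k) <-> (k = i \/ k = j).
Proof.
  destruct e as [S [i [j [Hij HS]]]]; simpl.
  exists (p i), (p j); split.
  - intro H. apply Hij. rewrite <- (pK p i), <- (pK p j), H. reflexivity.
  - intro k. rewrite HS. split.
    + intros [H|H]; [left|right]; rewrite <- H, pKV; reflexivity.
    + intros [H|H]; [left|right]; rewrite H, pK; reflexivity.
Qed.

(** The image pi({i,j}) = {pi(i), pi(j)}. *)
Definition mapE (I : Type) (p : perm I) (e : edge I) : edge I :=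
  exist _ (fun k => proj1_sig e (pinv p k)) (mapE_proof p e).

Definition amalgam_epi (I : Type) (Ut U : group) (At : amalgam I Ut) (A : amalgam I U)
  (pi : perm I) (rho : I -> hom Ut U)
  (alpha : forall e, hom (agrp At e) (agrp A (mapE pi e))) : Prop :=
  (forall i, surjective (rho i)) /\
  (forall e, surjective (alpha e)) /\
  (forall (e : edge I) (i : I), inE i e ->
     forall u : Ut, alpha e (aphi At i e u) = aphi A (pi i) (mapE pi e) (rho (pi i) u)).

Definition Zgrp (I : Type) (Ut : group) (At : amalgam I Ut) (V : Ut -> Prop) (e : edge I)
  : agrp At e -> Prop :=
  gen (fun y => exists i v, inE i e /\ V v /\ y = aphi At i e v).

Definition Ngrp (I : Type) (Ut : group) (At : amalgam I Ut) (Gt : group)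
  (taut : forall e, hom (agrp At e) Gt) (K : forall e, agrp At e -> Prop) : Gt -> Prop :=
  gen (fun y => exists e a, K e a /\ y = taut e a).

From Stdlib Require Import Classical FunctionalExtensionality PropExtensionality
  ClassicalEpsilon ProofIrrelevance.
Set Implicit Arguments.

(* Each tau_e(phi^i_e(v)) with v in V equals tau_f(phi^i_f(v)) for every edge f
   containing i, so together with any generator tau_f(phi^k_f(u)) of Gt it comes
   from a single group of the amalgam (G_f if i is in f, G_{ik} otherwise), in which
   Z is central; hence the tau_e(Z_e), and with them N, are central.
   For the kernel, let q : Gt -> Gt/N.  Each alpha_e is onto and its kernel goes
   into N, so q o taut_e factors through alpha_e, and the factors form an enveloping
   family of the amalgam A in Gt/N.  The universal property of G then gives
   p : G -> Gt/N with p o ahat = q, whence ker ahat <= ker q = N. *)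

Arguments gmulA {g}.
Arguments gmul1 {g}.
Arguments gmulV {g}.
Arguments hmul {G H}.

Definition commute {G : group} (x y : G) : Prop := gmul x y = gmul y x.

Definition normal {G : group} (N : G -> Prop) : Prop :=
  forall g n, N n -> N (gmul (ginv g) (gmul n g)).

Section GroupTheory.
Context {G : group}.
Implicit Types x y z : G.

Lemma mulg_idem_eq1 x : gmul x x = x -> x = gone.
Proof.
  intro Hxx. rewrite <- (gmul1 x) at 1. rewrite <- (gmulV x) at 1.
  rewrite <- gmulA, Hxx. apply gmulV.
Qed.

Lemma mulgV x : gmul x (ginv x) = gone.
Proof.
  apply mulg_idem_eq1. rewrite <- gmulA, (gmulA (ginv x) x), gmulV, gmul1. reflexivity.
Qed.

Lemma mulg1 x : gmul x gone = x.
Proof. rewrite <- (gmulV x), gmulA, mulgV, gmul1. reflexivity. Qed.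

Lemma mulKg x y : gmul (ginv x) (gmul x y) = y.
Proof. rewrite gmulA, gmulV, gmul1. reflexivity. Qed.

Lemma mulKVg x y : gmul x (gmul (ginv x) y) = y.
Proof. rewrite gmulA, mulgV, gmul1. reflexivity. Qed.

Lemma mulgI x y z : gmul x y = gmul x z -> y = z.
Proof. intro E. rewrite <- (mulKg x y), <- (mulKg x z), E. reflexivity. Qed.

Lemma invg1 : ginv (@gone G) = gone.
Proof. rewrite <- (mulg1 (ginv gone)). apply gmulV. Qed.

Lemma invgK x : ginv (ginv x) = x.
Proof. apply (mulgI (ginv x)). rewrite mulgV, gmulV. reflexivity. Qed.

Lemma subgroup_gen (S : G -> Prop) : subgroup (gen S).
Proof.
  split; [|split].
  - intros H [H1 _] _. exact H1.
  - intros x y Hx Hy H HH HS. apply HH; [apply Hx | apply Hy]; auto.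
  - intros x Hx H HH HS. apply HH, Hx; auto.
Qed.

Lemma mem_gen (S : G -> Prop) x : S x -> gen S x.
Proof. intros Sx H _ HS. auto. Qed.

Lemma gen_min (S H : G -> Prop) : subgroup H -> (forall y, S y -> H y) ->
  forall x, gen S x -> H x.
Proof. intros HH HS x Hx. apply Hx; auto. Qed.

Lemma subgroup_centralizer (g : G) : subgroup (commute g).
Proof.
  unfold commute. split; [|split].
  - rewrite gmul1, mulg1. reflexivity.
  - intros x y Hx Hy. rewrite gmulA, Hx, <- gmulA, Hy, gmulA. reflexivity.
  - intros x Hx. apply (mulgI x). rewrite (mulKVg x g).
    rewrite gmulA, <- Hx, <- gmulA, mulgV, mulg1. reflexivity.
Qed.

Lemma subgroup_center : subgroup (@center G).
Proof.
  split; [|split]; intros; intro z; symmetry; destruct (subgroup_centralizer z) as [C1 [CM CV]].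
  - exact C1.
  - apply CM; symmetry; auto.
  - apply CV; symmetry; auto.
Qed.

Lemma center_normal (N : G -> Prop) : (forall n, N n -> center n) -> normal N.
Proof. intros HC g n Nn. rewrite (HC n Nn g), mulKg. exact Nn. Qed.

End GroupTheory.

Section Homomorphisms.
Variables (G H : group) (f : hom G H).

Lemma hom1 : f gone = gone.
Proof. apply (mulgI (f gone)). rewrite <- hmul, gmul1, mulg1. reflexivity. Qed.

Lemma homV x : f (ginv x) = ginv (f x).
Proof. apply (mulgI (f x)). rewrite <- hmul, !mulgV, hom1. reflexivity. Qed.

End Homomorphisms.

Section HomomorphismSubgroups.
Variables (G H : group) (f : hom G H).

Lemma subgroup_preimage (P : H -> Prop) : subgroup P -> subgroup (fun x => P (f x)).
Proof.
  intros [P1 [PM PV]]. split; [|split].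
  - rewrite hom1. exact P1.
  - intros x y Hx Hy. rewrite hmul. auto.
  - intros x Hx. rewrite homV. auto.
Qed.

Lemma subgroup_ker : subgroup (ker f).
Proof.
  unfold ker. split; [|split].
  - apply hom1.
  - intros x y Hx Hy. rewrite hmul, Hx, Hy. apply gmul1.
  - intros x Hx. rewrite homV, Hx. apply invg1.
Qed.

Lemma subgroup_image : subgroup (fun y => exists x, f x = y).
Proof.
  split; [|split].
  - exists gone. apply hom1.
  - intros a b [x <-] [y <-]. exists (gmul x y). apply hmul.
  - intros a [x <-]. exists (ginv x). apply homV.
Qed.

Lemma subgroup_eq_hom (g : hom G H) : subgroup (fun x => f x = g x).
Proof.
  split; [|split].
  - rewrite !hom1. reflexivity.
  - intros x y Hx Hy. rewrite !hmul, Hx, Hy. reflexivity.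
  - intros x Hx. rewrite !homV, Hx. reflexivity.
Qed.

Lemma hom_factor (K : group) (t : hom G K) :
  surjective f -> (forall x, ker f x -> ker t x) ->
  exists t' : hom H K, forall x, t' (f x) = t x.
Proof.
  intros fsurj kerft.
  assert (tf : forall x y, f x = f y -> t x = t y).
  { intros x y E. apply (mulgI (ginv (t x))). rewrite gmulV, <- homV, <- hmul.
    symmetry. apply kerft. unfold ker. rewrite hmul, homV, E. apply gmulV. }
  set (pre := fun y => proj1_sig (constructive_indefinite_description _ (fsurj y))).
  assert (preK : forall y, f (pre y) = y).
  { intro y. unfold pre. destruct (constructive_indefinite_description _ _). auto. }
  unshelve eexists (@Hom H K (fun y => t (pre y)) _).
  - intros y z. cbv beta. rewrite <- hmul. apply tf. rewrite hmul, !preK. reflexivity.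
  - intro x. apply tf, preK.
Qed.

End HomomorphismSubgroups.

Definition hom_comp (G H K : group) (f : hom G H) (g : hom H K) : hom G K :=
  @Hom G K (fun x => g (f x)) (fun x y => eq_trans (f_equal g (hmul f x y)) (hmul g _ _)).

Section Quotient.
Variables (G : group) (N : G -> Prop).
Hypotheses (N_subgroup : subgroup N) (N_normal : normal N).

Definition coset (g : G) : G -> Prop := fun h => N (gmul (ginv g) h).
Definition coset_type := { P : G -> Prop | exists g, P = coset g }.
Definition coset_of (g : G) : coset_type := exist _ (coset g) (ex_intro _ g eq_refl).
Definition repr (P : coset_type) : G :=
  proj1_sig (constructive_indefinite_description _ (proj2_sig P)).

Lemma coset_ofK P : coset_of (repr P) = P.
Proof.
  destruct P as [P HP]. apply subset_eq_compat. unfold repr. simpl.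
  destruct (constructive_indefinite_description _ HP). simpl. auto.
Qed.

Lemma eq_coset_of g h : coset_of g = coset_of h <-> N (gmul (ginv g) h).
Proof.
  destruct N_subgroup as [N1 [NM NV]]. split.
  - intro E. apply (f_equal (@proj1_sig _ _)) in E. simpl in E.
    change (coset g h). rewrite E. unfold coset. rewrite gmulV. exact N1.
  - intro Ngh. apply subset_eq_compat. apply functional_extensionality. intro x.
    apply propositional_extensionality. unfold coset. split; intro Hx.
    + replace (gmul (ginv h) x) with (gmul (ginv (gmul (ginv g) h)) (gmul (ginv g) x)).
      { apply NM; auto. }
      apply (mulgI (gmul (ginv g) h)). rewrite mulKVg, <- gmulA, mulKVg. reflexivity.
    + replace (gmul (ginv g) x) with (gmul (gmul (ginv g) h) (gmul (ginv h) x)).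
      { apply NM; auto. }
      rewrite <- gmulA, mulKVg. reflexivity.
Qed.

(* (ab)^-1 a'b' = (b^-1 n b) (b^-1 b') with n = a^-1 a', which lies in N by normality. *)
Lemma coset_of_mul_congr a a' b b' :
  coset_of a = coset_of a' -> coset_of b = coset_of b' ->
  coset_of (gmul a b) = coset_of (gmul a' b').
Proof.
  rewrite !eq_coset_of. intros Na Nb.
  replace (gmul (ginv (gmul a b)) (gmul a' b'))
    with (gmul (gmul (ginv b) (gmul (gmul (ginv a) a') b)) (gmul (ginv b) b')).
  { apply N_subgroup; auto. }
  apply (mulgI (gmul a b)).
  rewrite mulKVg, <- gmulA, (gmulA b), mulKVg, <- !gmulA, !mulKVg. reflexivity.
Qed.

Definition coset_mul (P Q : coset_type) : coset_type := coset_of (gmul (repr P) (repr Q)).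
Definition coset_one : coset_type := coset_of gone.
Definition coset_inv (P : coset_type) : coset_type := coset_of (ginv (repr P)).

Lemma coset_mulA P Q R : coset_mul P (coset_mul Q R) = coset_mul (coset_mul P Q) R.
Proof.
  unfold coset_mul.
  transitivity (coset_of (gmul (repr P) (gmul (repr Q) (repr R)))).
  { apply coset_of_mul_congr; [reflexivity | apply coset_ofK]. }
  rewrite gmulA. apply coset_of_mul_congr; [symmetry; apply coset_ofK | reflexivity].
Qed.

Lemma coset_mul1 P : coset_mul coset_one P = P.
Proof.
  unfold coset_mul, coset_one. rewrite <- (coset_ofK P) at 2.
  rewrite <- (gmul1 (repr P)) at 2. apply coset_of_mul_congr; [apply coset_ofK | reflexivity].
Qed.

Lemma coset_mulV P : coset_mul (coset_inv P) P = coset_one.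
Proof.
  unfold coset_mul, coset_inv, coset_one. rewrite <- (gmulV (repr P)).
  apply coset_of_mul_congr; [apply coset_ofK | reflexivity].
Qed.

Definition quotient : group :=
  @Group coset_type coset_mul coset_one coset_inv coset_mulA coset_mul1 coset_mulV.

Lemma coset_ofM x y : (coset_of (gmul x y) : quotient) = gmul (coset_of x : quotient) (coset_of y).
Proof. apply coset_of_mul_congr; symmetry; apply coset_ofK. Qed.

Definition coset_hom : hom G quotient := @Hom G quotient coset_of coset_ofM.

Lemma ker_coset_hom x : ker coset_hom x <-> N x.
Proof.
  unfold ker. simpl. unfold coset_one.
  rewrite (eq_coset_of x gone) at 1.
  split.
  - intro Nx. rewrite mulg1 in Nx. rewrite <- (invgK x). apply N_subgroup, Nx.
  - intro Nx. rewrite mulg1. apply N_subgroup, Nx.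
Qed.

End Quotient.

Lemma hom_family_factor {J : Type} {m : J -> J} {X Y : J -> group} {Q : group}
  {a : forall e, hom (X e) (Y (m e))} {t : forall e, hom (X e) Q}
  (minj : injective m) (msurj : surjective m) (asurj : forall e, surjective (a e))
  (kerat : forall e x, ker (a e) x -> ker (t e) x) :
  exists t' : forall f, hom (Y f) Q, forall e x, t' (m e) (a e x) = t e x.
Proof.
  assert (factor : forall f, exists h : hom (Y f) Q,
             forall e (E : m e = f) x, h (eq_rect _ Y (a e x) f E) = t e x).
  { intro f. destruct (msurj f) as [e0 <-].
    destruct (hom_factor (asurj e0) (kerat e0)) as [h Hh].
    exists h. intros e E x. pose proof (minj _ _ E) as <-.
    rewrite (proof_irrelevance _ E eq_refl). apply Hh. }
  exists (fun f => proj1_sig (constructive_indefinite_description _ (factor f))).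
  intros e x. destruct (constructive_indefinite_description _ (factor (m e))) as [h Hh].
  exact (Hh e eq_refl x).
Qed.

Definition edge_pair (I : Type) (i k : I) (ik : i <> k) : edge I :=
  exist _ (fun x => x = i \/ x = k) (ex_intro _ i (ex_intro _ k (conj ik (fun x => iff_refl _)))).

Definition perm_inv (I : Type) (p : perm I) : perm I := Perm (pinv p) (pfun p) (pKV p) (pK p).

Section EdgePermutation.
Variables (I : Type) (p : perm I).

Lemma perm_surj j : exists i, p i = j.
Proof. exists (pinv p j). apply pKV. Qed.

Lemma inE_mapE i e : inE (p i) (mapE p e) <-> inE i e.
Proof. unfold inE. simpl. rewrite pK. reflexivity. Qed.

Lemma mapE_inj : injective (mapE p).
Proof.
  intros e e' E. destruct e as [S HS], e' as [S' HS']. apply subset_eq_compat.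
  apply functional_extensionality. intro k.
  apply (f_equal (fun e => proj1_sig e (p k))) in E. simpl in E. rewrite !pK in E. exact E.
Qed.

Lemma mapE_surj : surjective (mapE p).
Proof.
  intro f. exists (mapE (perm_inv p) f). destruct f as [S HS]. apply subset_eq_compat.
  apply functional_extensionality. intro k. simpl. rewrite pKV. reflexivity.
Qed.

End EdgePermutation.

Section Centrality.
Context {I : Type} {U : group} {A : amalgam I U} {V : U -> Prop}.
Context {G : group} {tau : forall e, hom (agrp A e) G}.
Hypothesis tau_env : enveloping A tau.
Hypothesis A_gen : forall e x, gen (fun y => exists i u, inE i e /\ y = aphi A i e u) x.
Hypothesis Z_center : forall e x, Zgrp A V e x -> center x.

Lemma Zgrp_phi e i v (ie : inE i e) (Vv : V v) : Zgrp A V e (aphi A i e v).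
Proof. apply mem_gen. exists i, v. auto. Qed.

Lemma tau_phi_commute e f i k v u : inE i e -> inE k f -> V v ->
  commute (tau e (aphi A i e v)) (tau f (aphi A k f u)).
Proof.
  intros ie kf Vv. unfold commute.
  destruct (classic (inE i f)) as [if_ | nif].
  - rewrite (proj2 tau_env e f i ie if_ v), <- !hmul.
    f_equal. exact (Z_center (Zgrp_phi f i if_ Vv) _).
  - assert (ik : i <> k) by (intros ->; contradiction).
    rewrite (proj2 tau_env e (edge_pair ik) i ie (or_introl eq_refl) v).
    rewrite (proj2 tau_env f (edge_pair ik) k kf (or_intror eq_refl) u).
    rewrite <- !hmul. f_equal. exact (Z_center (Zgrp_phi (edge_pair ik) i (or_introl eq_refl) Vv) _).
Qed.

Lemma tau_Zgrp_center e x : Zgrp A V e x -> center (tau e x).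
Proof.
  apply (gen_min (subgroup_preimage (tau e) (subgroup_center))).
  intros y [i [v [ie [Vv ->]]]] g.
  refine (gen_min (subgroup_centralizer _) _ (proj1 tau_env g)).
  intros y [f [z ->]].
  refine (gen_min (subgroup_preimage (tau f) (subgroup_centralizer _)) _ (A_gen f z)).
  intros w [k [u [kf ->]]]. apply tau_phi_commute; auto.
Qed.

Lemma Ngrp_center (K : forall e, agrp A e -> Prop) :
  (forall e x, K e x -> Zgrp A V e x) -> forall x, Ngrp A tau K x -> center x.
Proof.
  intros KZ. apply (gen_min subgroup_center).
  intros y [e [z [Kz ->]]]. apply tau_Zgrp_center, KZ, Kz.
Qed.

End Centrality.

Section AmalgamEpimorphism.
Context {I : Type} {Ut U : group} {At : amalgam I Ut} {A : amalgam I U}.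
Context {pi : perm I} {rho : I -> hom Ut U}.
Context {alpha : forall e, hom (agrp At e) (agrp A (mapE pi e))}.
Hypothesis alpha_epi : amalgam_epi At A pi rho alpha.
Context {Gt : group} {taut : forall e, hom (agrp At e) Gt}.
Context {G : group} {tau : forall e, hom (agrp A e) G}.
Hypotheses (taut_env : enveloping At taut) (tau_univ : universal A tau).
Context {ahat : hom Gt G}.
Hypothesis ahat_taut : forall e x, ahat (taut e x) = tau (mapE pi e) (alpha e x).

Lemma ahat_surjective : surjective ahat.
Proof.
  intro y. refine (gen_min (subgroup_image ahat) _ (proj1 (proj1 tau_univ) y)).
  intros y' [f [z ->]]. destruct (mapE_surj pi f) as [e <-].
  destruct (proj1 (proj2 alpha_epi) e z) as [x <-]. exists (taut e x). apply ahat_taut.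
Qed.

Lemma Ngrp_sub_ker x : Ngrp At taut (fun e => ker (alpha e)) x -> ker ahat x.
Proof.
  apply (gen_min (subgroup_ker ahat)).
  intros y [e [a [ea ->]]]. unfold ker. rewrite ahat_taut, ea. apply hom1.
Qed.

Section Descent.
Context {Q : group} {q : hom Gt Q} {tau' : forall f, hom (agrp A f) Q}.
Hypothesis tau'_alpha : forall e x, tau' (mapE pi e) (alpha e x) = q (taut e x).

Lemma descended_enveloping : surjective q -> enveloping A tau'.
Proof.
  intro qsurj. split.
  - intro P. destruct (qsurj P) as [g <-].
    refine (gen_min (subgroup_preimage q (subgroup_gen _)) _ (proj1 taut_env g)).
    intros y [e [z ->]]. apply mem_gen. exists (mapE pi e), (alpha e z).
    symmetry. apply tau'_alpha.
  - intros f g j jf jg u.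
    destruct (mapE_surj pi f) as [e <-], (mapE_surj pi g) as [e' <-].
    destruct (perm_surj pi j) as [i <-], (proj1 alpha_epi (pi i) u) as [ut <-].
    apply inE_mapE in jf, jg.
    destruct alpha_epi as [_ [_ alpha_phi]].
    rewrite <- (alpha_phi e i jf), <- (alpha_phi e' i jg), !tau'_alpha.
    f_equal. apply (proj2 taut_env); auto.
Qed.

Lemma ker_ahat_sub_ker : surjective q -> forall x, ker ahat x -> ker q x.
Proof.
  intros qsurj x ahat_x.
  destruct (proj2 tau_univ Q tau' (descended_enveloping qsurj)) as [p [_ [p_tau _]]].
  assert (p_ahat : forall y, p (ahat y) = q y).
  { intro y.
    refine (gen_min (subgroup_eq_hom (hom_comp ahat p) q) _ (proj1 taut_env y)).
    intros y' [e [z ->]]. simpl. rewrite ahat_taut, p_tau. apply tau'_alpha. }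
  unfold ker. rewrite <- p_ahat, ahat_x. apply hom1.
Qed.

End Descent.

Lemma ker_sub_Ngrp (N_center : forall x, Ngrp At taut (fun e => ker (alpha e)) x -> center x) x :
  ker ahat x -> Ngrp At taut (fun e => ker (alpha e)) x.
Proof.
  set (N := Ngrp At taut (fun e => ker (alpha e))).
  set (q := coset_hom (subgroup_gen _ : subgroup N) (center_normal _ N_center)).
  assert (q_surj : surjective q).
  { intro P. exists (repr P). apply coset_ofK. }
  assert (ker_alpha_q : forall e z, ker (alpha e) z -> ker (hom_comp (taut e) q) z).
  { intros e z ez. apply ker_coset_hom, mem_gen. exists e, z. auto. }
  destruct (hom_family_factor (mapE_inj (p := pi)) (mapE_surj pi) (proj1 (proj2 alpha_epi))
              ker_alpha_q) as [tau' tau'_alpha].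
  intro ahat_x. apply (ker_coset_hom (subgroup_gen _) (center_normal _ N_center)).
  exact (ker_ahat_sub_ker tau'_alpha q_surj ahat_x).
Qed.

End AmalgamEpimorphism.

Theorem mainTheorem1 (I : Type) (U Ut : group) (Vt : Ut -> Prop) (hVt : subgroup Vt)
  (At : amalgam I Ut)
  (hgenAt : forall (e : edge I) (x : agrp At e),
      gen (fun y => exists i u, inE i e /\ y = aphi At i e u) x)
  (A : amalgam I U)
  (pi : perm I) (rho : I -> hom Ut U)
  (alpha : forall e, hom (agrp At e) (agrp A (mapE pi e)))
  (halpha : amalgam_epi At A pi rho alpha)
  (Gt : group) (taut : forall e, hom (agrp At e) Gt) (hGt : universal At taut)
  (G : group) (tau : forall e, hom (agrp A e) G) (hG : universal A tau)
  (ahat : hom Gt G)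
  (hahat : forall e x, ahat (taut e x) = tau (mapE pi e) (alpha e x))
  (hAZ : forall e x, ker (alpha e) x -> Zgrp At Vt e x)
  (hZC : forall e x, Zgrp At Vt e x -> center x) :
  (forall x, Ngrp At taut (fun e => ker (alpha e)) x -> center x) /\
  (forall x, Ngrp At taut (fun e => ker (alpha e)) x <-> ker ahat x) /\
  surjective ahat.
Proof.
  destruct hGt as [taut_env _].
  assert (N_center := Ngrp_center taut_env hgenAt hZC hAZ).
  split; [exact N_center | split].
  - intro x. split.
    + apply (Ngrp_sub_ker hahat).
    + apply (ker_sub_Ngrp halpha taut_env hG hahat N_center).
  - exact (ahat_surjective halpha hG hahat).
Qed.
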